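(* Let $G$ be a finite abelian group (written additively) and fix $\omega \in G$. Consider the Frobenius object in $\mathbf{Rel}$ with underlying set $X = G$, unit $\eta = \{0\}$, multiplication $\tilde{\mu}(x,y) = \{x+y\}$ for $x,y \in G$, and counit $\varepsilon = \{\omega\}$. Then for every integer $g \ge 0$ its partition function satisfies $$Z(\Sigma_g) = \begin{cases} T & \text{if } (g-1)\omega = 0,\\ F & \text{otherwise.}\end{cases}$$
   Context: $\mathbf{Rel}$ is the symmetric monoidal category whose objects are sets, whose morphisms $X \to Y$ are relations $R \subseteq X \times Y$, composed by $S\circ R = \{(x,z) : \exists y,\ (x,y)\in R,\ (y,z)\in S\}$, with identity the diagonal, monoidal product the Cartesian product, and unit the one-point set $\{\bullet\}$. A relation $R \subseteq X\times Y$ is identified with the map $\tilde R: X \to \mathcal{P}(Y)$, $\tilde R(x) = \{y : (x,y)\in R\}$. A Frobenius object in $\mathbf{Rel}$ is a set $X$ with a unit $\eta \subseteq X$ (a relation $\{\bullet\}\to X$), a counit $\varepsilon \subseteq X$ (a relation $X \to \{\bullet\}$), and a multiplication $\mu \subseteq X\times X\times X$ (a relation $X\times X \to X$, with map $\tilde\mu: X\times X\to\mathcal{P}(X)$) satisfying unitality $\mu\circ(\mathbf{1}\times\eta)=\mu\circ(\eta\times\mathbf{1})=\mathbf{1}$, associativity $\mu\circ(\mathbf{1}\times\mu)=\mu\circ(\mu\times\mathbf{1})$, and nondegeneracy: there is a relation $\beta:\{\bullet\}\to X\times X$ with $(\varepsilon\times\mathbf{1})\circ(\mu\times\mathbf{1})\circ(\mathbf{1}\times\beta)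 = (\mathbf{1}\times\varepsilon)\circ(\mathbf{1}\times\mu)\circ(\beta\times\mathbf{1}) = \mathbf{1}$ (such $\beta$ is unique). The comultiplication is $\delta = (\mathbf{1}\times\mu)\circ(\beta\times\mathbf{1}): X \to X\times X$. It is commutative if $\tilde\mu(x,y)=\tilde\mu(y,x)$ for all $x,y$. For a commutative Frobenius object, the partition function on the closed orientable surface $\Sigma_g$ of genus $g\ge 0$ is $Z(\Sigma_g) = \varepsilon\circ(\mu\circ\delta)^g\circ\eta \in \mathrm{Hom}_{\mathbf{Rel}}(\{\bullet\},\{\bullet\}) = \{\emptyset,\{\bullet\}\}$, where $\emptyset$ is identified with $F$ (false) and $\{\bullet\}$ with $T$ (true). *)

(* Relations in Rel are modelled as Prop-valued binary
   predicates on types; a relation R : X -> Y corresponds to R x y <-> (x,y) in R. *)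
From mathcomp Require Import all_boot all_algebra.
Set Implicit Arguments. Unset Strict Implicit. Unset Printing Implicit Defensive.

Definition Rrel (A B : Type) := A -> B -> Prop.

Definition rcomp A B C (S : Rrel B C) (R : Rrel A B) : Rrel A C :=
  fun a c => exists b, R a b /\ S b c.
Definition rid A : Rrel A A := fun a b => a = b.
Definition rtensor A B C D (R : Rrel A C) (S : Rrel B D) : Rrel (A * B) (C * D) :=
  fun p q => R p.1 q.1 /\ S p.2 q.2.
Definition req A B (R S : Rrel A B) : Prop := forall a b, R a b <-> S a b.

Definition lunit A : Rrel (unit * A) A := fun p a => p.2 = a.
Definition lunitinv A : Rrel A (unit * A) := fun a p => p.2 = a.
Definition runit A : Rrel (A * unit) A := fun p a => p.1 = a.
Definition runitinv A : Rrel A (A * unit) := fun a p => p.1 = a.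
Definition rassoc A B C : Rrel ((A * B) * C) (A * (B * C)) :=
  fun p q => q = (p.1.1, (p.1.2, p.2)).
Definition rassocinv A B C : Rrel (A * (B * C)) ((A * B) * C) :=
  fun p q => q = ((p.1, p.2.1), p.2.2).

Section Frob.
Variables (X : Type) (eta : Rrel unit X) (eps : Rrel X unit)
          (mu : Rrel (X * X) X) (beta : Rrel unit (X * X)).

(* (eps x 1) o (mu x 1) o (1 x beta) = 1, with the coherence isos made explicit *)
Definition nondeg_left : Prop :=
  req (rcomp (lunit (A:=X))
       (rcomp (rtensor eps (@rid X))
       (rcomp (rtensor mu (@rid X))
       (rcomp (rassocinv (A:=X) (B:=X) (C:=X))
       (rcomp (rtensor (@rid X) beta) (runitinv (A:=X)))))))
      (@rid X).

(* (1 x eps) o (1 x mu) o (beta x 1) = 1 *)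
Definition nondeg_right : Prop :=
  req (rcomp (runit (A:=X))
       (rcomp (rtensor (@rid X) eps)
       (rcomp (rtensor (@rid X) mu)
       (rcomp (rassoc (A:=X) (B:=X) (C:=X))
       (rcomp (rtensor beta (@rid X)) (lunitinv (A:=X)))))))
      (@rid X).

Definition frob_nondegenerate : Prop := nondeg_left /\ nondeg_right.

(* comultiplication delta = (1 x mu) o (beta x 1) : X -> X x X *)
Definition comult : Rrel X (X * X) :=
  rcomp (rtensor (@rid X) mu)
  (rcomp (rassoc (A:=X) (B:=X) (C:=X))
  (rcomp (rtensor beta (@rid X)) (lunitinv (A:=X)))).

Definition handle : Rrel X X := rcomp mu comult.

(* Z(Sigma_g) = eps o (mu o delta)^g o eta, an element of Hom({*},{*}),
   identified with a Prop: True (T) iff (tt,tt) is in the relation. *)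
Definition partition_fun (g : nat) : Prop :=
  rcomp eps (rcomp (iter g (rcomp handle) (@rid X)) eta) tt tt.
End Frob.

(* The copairing of the Frobenius object is forced by nondegeneracy to be
   beta = {(omega - y, y)}, so the handle mu o delta is translation by omega
   and Z(Sigma_g) = eps o (+ omega)^g o eta holds iff g omega = omega. *)
From mathcomp Require Import all_boot all_algebra.
Import GRing.Theory.
Local Open Scope ring_scope.

Definition rgraph {A B : Type} (f : A -> B) : Rrel A B := fun a b => b = f a.

Lemma iter_rcomp_graph {A : Type} {R : Rrel A A} {f : A -> A} n :
  req R (rgraph f) -> req (iter n (rcomp R) (@rid A)) (rgraph (iter n f)).
Proof.
move=> Rf; elim: n => [|n IHn] a c /=; first by split=> ->.
split=> [[b [/IHn -> /Rf ->]] | ->] //.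
by exists (iter n f a); split; [apply/IHn | apply/Rf].
Qed.

Section FrobeniusRelations.
Context {X : Type} {eta : Rrel unit X} {eps : Rrel X unit}
        {mu : Rrel (X * X) X} {beta : Rrel unit (X * X)}.

Lemma nondeg_leftE :
  nondeg_left eps mu beta <->
  forall x y, (exists a z, [/\ beta tt (a, y), mu (x, a) z & eps z tt]) <-> x = y.
Proof.
suff compE x y : rcomp (lunit (A:=X)) (rcomp (rtensor eps (@rid X))
    (rcomp (rtensor mu (@rid X)) (rcomp (rassocinv (A:=X) (B:=X) (C:=X))
    (rcomp (rtensor (@rid X) beta) (runitinv (A:=X)))))) x y <->
    exists a z, [/\ beta tt (a, y), mu (x, a) z & eps z tt].
  by split=> nd x y; split=> [/compE/nd | /nd/compE].
split=> [|[a [z [bay mxz ez]]]].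
- move=> [[[] y1] [[[z y2] [[[[x1 a] y3] [[[x2 [a' y4]]
    [[[x3 []] [ex [ex' b]]] e]] [mz ey3]]] [ez ey2]]] ey1]].
  rewrite /runitinv /rid /lunit /rassocinv /= in ex ex' ey3 ey2 ey1 e b.
  by case: e => ? ? ?; subst; exists a', z.
- exists (tt, y); split=> //; exists (z, y); split=> //.
  exists ((x, a), y); split=> //; exists (x, (a, y)); split=> //.
  by exists (x, tt).
Qed.

Lemma comultE x u v :
  comult mu beta x (u, v) <-> exists a, beta tt (u, a) /\ mu (a, x) v.
Proof.
split=> [[[u' [a x']] [[[[u0 a0] x0] [[[[] x''] [ex [b e']]] e]] [eu mv]]] | [a [bua mv]]].
- rewrite /lunitinv /rid /rassoc /= in ex e' e eu b.
  by case: e => ? ? ?; subst; exists a0.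
- exists (u, (a, x)); split=> //; exists ((u, a), x); split=> //.
  by exists (tt, x).
Qed.

Lemma partition_funE g :
  partition_fun eta eps mu beta g <->
  exists x y, [/\ eta tt x, iter g (rcomp (handle mu beta)) (@rid X) x y & eps y tt].
Proof.
split=> [[y [[x [ex hxy]] ey]] | [x [y [ex hxy ey]]]]; first by exists x, y.
by exists y; split=> //; exists x.
Qed.

End FrobeniusRelations.

Section GroupFrobenius.
Context {G : zmodType} {omega : G} {beta : Rrel unit (G * G)%type}.
Let eps : Rrel G unit := fun x _ => x = omega.
Let add : Rrel (G * G) G := rgraph (fun p => p.1 + p.2).

Lemma group_copairingE :
  nondeg_left eps add beta -> forall a y, beta tt (a, y) <-> a = omega - y.
Proof.
move/nondeg_leftE=> nd a y; split=> [bay | ->].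
- suff <- : omega - a = y by rewrite opprB addrC subrK.
  by apply/nd; exists a, omega; split=> //; rewrite /add /rgraph /= subrK.
- have [a' [_ [bay -> /= ez]]] := proj2 (nd y y) erefl.
  by rewrite -ez addrC addKr.
Qed.

Lemma group_handleE :
  nondeg_left eps add beta -> req (handle add beta) (rgraph (+%R omega)).
Proof.
move=> nd x z; have bE := group_copairingE nd.
split=> [[[u v] [/comultE [a [/bE -> ->]] ->]] | ->] /=.
- by rewrite /rgraph addrA subrK.
- exists (omega, x); split=> //.
  apply/comultE; exists 0; split; last by rewrite /add /rgraph /= add0r.
  by apply/bE; rewrite subr0.
Qed.

End GroupFrobenius.

Lemma mulrn_eq_self_mulrz {G : zmodType} (x : G) (n : nat) :
  x *+ n = x <-> x *~ (n%:Z - 1) = 0.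
Proof.
rewrite mulrzBr -pmulrn mulr1z.
by split=> [-> | /subr0_eq]; first exact: subrr.
Qed.

Theorem proposition4p1 (G : finZmodType) (omega : G)
  (beta : Rrel unit (G * G)%type)
  (hbeta : frob_nondegenerate (fun (x : G) (_ : unit) => x = omega)
             (fun (p : (G * G)%type) (z : G) => z = p.1 + p.2) beta)
  (g : nat) :
  partition_fun (fun (_ : unit) (x : G) => x = 0) (fun (x : G) (_ : unit) => x = omega)
    (fun (p : (G * G)%type) (z : G) => z = p.1 + p.2) beta g
  <-> omega *~ (g%:Z - 1) = 0.
Proof.
have powE := iter_rcomp_graph g (group_handleE hbeta.1).
apply: (iff_trans (partition_funE g)); apply: (iff_trans _ (mulrn_eq_self_mulrz omega g)).
split=> [[x [y [-> /powE -> powE0]]] | gE]; first by rewrite -iter_addr_0 powE0.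
by exists 0, omega; split=> //; apply/powE; rewrite /rgraph iter_addr_0 gE.
Qed.
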